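(* For every integer $n\ge 0$, $$l_{3n}(1,2,-1,q)\,[3n+1]=(-1)^n q^{\frac{n(3n-1)}{2}}[n+1],$$ $$l_{3n+1}(1,2,-1,q)\,[3n+2]=(-1)^n q^{\frac{n(3n+1)}{2}}[n+1]\,(1+q^{n+1}),$$ $$l_{3n+2}(1,2,-1,q)\,[3n+3]=(-1)^n q^{\frac{3n^2+5n+4}{2}}[n+1].$$
   Context: $q$ is an indeterminate; $[n]=\frac{1-q^n}{1-q}$, $[n]!=[1]\cdots[n]$, $[0]!=1$. For an integer $m\ge0$, $$l_n(x,m,s,q)=\sum_{k=0}^{\lfloor n/2\rfloor}s^k q^{\binom k2}\frac{[n]!}{[k]!\,[n-2k]!}\,\frac{[m+n-k-1]!}{[m+n-1]!}\,x^{n-2k}\quad (n\ge1),\qquad l_0(x,m,s,q)=1.$$ *)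

(* The indeterminate q is modelled as the element 'X of the
   field of rational functions {fraction {poly rat}}. *)
From HB Require Import structures.
From mathcomp Require Import all_boot all_order all_algebra fraction.
Set Implicit Arguments. Unset Strict Implicit. Unset Printing Implicit Defensive.
Import Order.TTheory GRing.Theory Num.Theory.
Local Open Scope ring_scope.


Definition RF := {fraction {poly rat}}.
Definition qX : RF := @FracField.tofrac _ 'X.

Definition qint (F : fieldType) (q : F) (n : nat) : F := (1 - q ^+ n) / (1 - q).
Definition qfact (F : fieldType) (q : F) (n : nat) : F :=
  \prod_(i < n) qint q i.+1.

Definition lpoly (F : fieldType) (n : nat) (x : F) (m : nat) (s q : F) : F :=
  if n == 0%N then 1 else
  \sum_(k < n./2.+1)
     s ^+ k * q ^+ 'C(k, 2) * (qfact q n / (qfact q k * qfact q (n - 2 * k)))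
     * (qfact q (m + n - k - 1) / qfact q (m + n - 1)) * x ^+ (n - 2 * k).

From HB Require Import structures.
From mathcomp Require Import all_boot all_order all_algebra fraction.
From mathcomp Require Import ring zify.
Set Implicit Arguments. Unset Strict Implicit. Unset Printing Implicit Defensive.
Import Order.TTheory GRing.Theory Num.Theory.
Local Open Scope ring_scope.

(* Multiplying by [n+1] turns the factorial quotients of l_n(1,2,-1,q) into
   Gaussian binomials, and since (1-q)[n+1-k] = 1 - q * q^(n-k),
   (1-q) l_n [n+1] = F_n - q K_n with the q-Fibonacci sums
   F_n = sum_k (-1)^k q^C(k,2) [n-k choose k] and K_n the same sum weighted
   by q^(n-k).  The two q-Pascal rules give F_(n+2) = F_(n+1) - K_n and
   K_(n+2) = q^(n+2) F_(n+1) - q^(n+1) F_n, hence a four-term recurrence for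
   F whose solution has period 3 up to sign and a power of q, with
   F_(3m+2) = 0.  The closed forms of l_n follow by substitution. *)

Section QFibonacci.

Variables (F : fieldType) (q : F).
Hypothesis qpow_neq1 : forall j, (0 < j)%N -> q ^+ j != 1.

Lemma qint_add a b : qint q (a + b) = qint q a + q ^+ a * qint q b.
Proof. by rewrite /qint exprD; ring. Qed.

Lemma subr1q_neq0 : 1 - q != 0.
Proof. by rewrite subr_eq0 eq_sym -[q]expr1 qpow_neq1. Qed.

Lemma qint1 : qint q 1 = 1.
Proof. by rewrite /qint expr1 divff // subr1q_neq0. Qed.

Lemma qint_neq0 i : (0 < i)%N -> qint q i != 0.
Proof.
move=> i_gt0; rewrite /qint mulf_neq0 ?invr_eq0 ?subr1q_neq0 //.
by rewrite subr_eq0 eq_sym qpow_neq1.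
Qed.

Lemma qfact0 : qfact q 0 = 1.
Proof. by rewrite /qfact big_ord0. Qed.

Lemma qfactS n : qfact q n.+1 = qfact q n * qint q n.+1.
Proof. by rewrite /qfact big_ord_recr. Qed.

Lemma qfact_neq0 n : qfact q n != 0.
Proof.
elim: n => [|n IHn]; first by rewrite qfact0 oner_neq0.
by rewrite qfactS mulf_neq0 // qint_neq0.
Qed.

Fixpoint qbinom (m k : nat) : F :=
  match m, k with
  | 0, 0 => 1
  | 0, _.+1 => 0
  | _.+1, 0 => 1
  | m'.+1, k'.+1 => q ^+ (m' - k') * qbinom m' k' + qbinom m' k'.+1
  end.

Lemma qbinom_small m k : (m < k)%N -> qbinom m k = 0.
Proof.
elim: m k => [|m IHm] [|k] //= lt_mk.
by rewrite !IHm ?mulr0 ?addr0 //; lia.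
Qed.

Lemma qbinomn0 m : qbinom m 0 = 1.
Proof. by case: m. Qed.

Lemma qbinom_qfact i j :
  qbinom (i + j) i * (qfact q i * qfact q j) = qfact q (i + j).
Proof.
elim: i j => [|i IHi] j; first by rewrite qbinomn0 qfact0 !mul1r.
elim: j => [|j IHj].
  rewrite !addn0 /= subnn expr0 mul1r (@qbinom_small i i.+1) // addr0 qfact0 !qfactS.
  have := IHi 0%N; rewrite !addn0 qfact0 mulr1 => IHi0.
  by rewrite -[in RHS]IHi0; ring.
have := IHi j.+1; rewrite addnS in IHj * => IHij.
rewrite /= addKn [in RHS]addSn addnS (qfactS (i + j).+1).
rewrite (_ : ((i + j).+2 = j.+1 + i.+1)%N) ?qint_add; last by lia.
by rewrite mulrDr -{1}IHj -IHij !qfactS; ring.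
Qed.

Lemma qbinomE i j : qbinom (i + j) i = qfact q (i + j) / (qfact q i * qfact q j).
Proof. by rewrite -qbinom_qfact mulfK // mulf_neq0 ?qfact_neq0. Qed.

Lemma qbinomSS m k :
  qbinom m.+1 k.+1 = q ^+ k.+1 * qbinom m k.+1 + qbinom m k.
Proof.
case: (ltngtP k m) => [lt_km | lt_mk | <-]; last first.
- by rewrite /= subnn expr0 mul1r !(@qbinom_small k k.+1) // mulr0 add0r addr0.
- by rewrite !qbinom_small ?mulr0 ?addr0 // ltnW.
have [j ->] : exists j, m = (k.+1 + j)%N by exists (m - k.+1)%N; lia.
apply: (@mulIf _ (qfact q k.+1 * qfact q j.+1)); first by rewrite mulf_neq0 ?qfact_neq0.
rewrite -addnS qbinom_qfact addnS qfactS -addnS qint_add mulrDr.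
rewrite addSnnS -{1}(qbinom_qfact k j.+1) -addSnnS -(qbinom_qfact k.+1 j) !qfactS.
ring.
Qed.

Definition qfib_term n k : F := (-1) ^+ k * q ^+ 'C(k, 2) * qbinom (n - k) k.
Definition qfib n : F := \sum_(0 <= k < n.+1) qfib_term n k.
Definition qfib_shift n : F := \sum_(0 <= k < n.+1) q ^+ (n - k) * qfib_term n k.

Lemma qfib_term_n0 n : qfib_term n 0 = 1.
Proof. by rewrite /qfib_term subn0 qbinomn0 bin0n !expr0 !mulr1. Qed.

Lemma qfib_term_nn n : qfib_term n.+1 n.+1 = 0.
Proof. by rewrite /qfib_term subnn qbinom_small // mulr0. Qed.

Lemma qfib_term_eq0 n k : (n < k + k)%N -> qfib_term n k = 0.
Proof. by move=> lt_n_kk; rewrite /qfib_term qbinom_small ?mulr0 //; lia. Qed.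

Lemma qfib_termSS n k : (k <= n)%N ->
  qfib_term n.+2 k.+1 = qfib_term n.+1 k.+1 - q ^+ (n - k) * qfib_term n k.
Proof.
move=> le_kn; rewrite /qfib_term !subSS subSn //= binS bin1 exprD !exprS.
case: (leqP k (n - k)) => [le_k_nk | lt_nk_k]; last first.
  by rewrite qbinom_small //; ring.
have -> : q ^+ (n - k) = q ^+ (n - k - k) * q ^+ k by rewrite -exprD subnK.
ring.
Qed.

Lemma qfib_shift_termSS n k : (k <= n)%N ->
  q ^+ (n.+2 - k.+1) * qfib_term n.+2 k.+1
  = q ^+ n.+2 * qfib_term n.+1 k.+1 - q ^+ n.+1 * qfib_term n k.
Proof.
move=> le_kn; rewrite /qfib_term !subSS subSn // qbinomSS binS bin1 (exprS q n.+1).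
have -> : q ^+ n.+1 = q ^+ k * q ^+ (n - k).+1 by rewrite -exprD addnS subnKC.
by rewrite !exprS exprD; ring.
Qed.

Lemma qfibSS n : qfib n.+2 = qfib n.+1 - qfib_shift n.
Proof.
rewrite /qfib big_nat_recl // big_nat_recr //= qfib_term_nn addr0.
rewrite [in RHS]big_nat_recl // !qfib_term_n0 -addrA /qfib_shift -sumrB.
by congr (_ + _); apply: eq_big_nat => k /andP[_ lt_kn]; rewrite qfib_termSS.
Qed.

Lemma qfib_shift_qfib n : qfib_shift n = qfib n.+1 - qfib n.+2.
Proof. by rewrite qfibSS; ring. Qed.

Lemma qfib_shiftSS n :
  qfib_shift n.+2 = q ^+ n.+2 * qfib n.+1 - q ^+ n.+1 * qfib n.
Proof.
rewrite /qfib_shift /qfib big_nat_recl // big_nat_recr //= qfib_term_nn mulr0 addr0.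
rewrite [in RHS]big_nat_recl // !qfib_term_n0 subn0 mulr1 mulrDr mulr1 -addrA.
rewrite !mulr_sumr -sumrB.
by congr (_ + _); apply: eq_big_nat => k /andP[_ lt_kn]; rewrite qfib_shift_termSS.
Qed.

Lemma qfib_rec n :
  qfib n.+4 = qfib n.+3 - q ^+ n.+2 * qfib n.+1 + q ^+ n.+1 * qfib n.
Proof. by rewrite qfibSS qfib_shiftSS; ring. Qed.

Lemma qfib0 : qfib 0 = 1.
Proof. by rewrite /qfib big_nat1 qfib_term_n0. Qed.

Lemma qfib1 : qfib 1 = 1.
Proof. by rewrite /qfib big_nat_recr //= big_nat1 qfib_term_n0 qfib_term_nn addr0. Qed.

Lemma qfib_shift0 : qfib_shift 0 = 1.
Proof. by rewrite /qfib_shift big_nat1 qfib_term_n0 mulr1. Qed.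

Lemma qfib_shift1 : qfib_shift 1 = q.
Proof.
by rewrite /qfib_shift big_nat_recr //= big_nat1 qfib_term_n0 qfib_term_nn mulr0 addr0 mulr1.
Qed.

Lemma qfib_mod3 m :
  [/\ qfib (3 * m) = (-1) ^+ m * q ^+ (3 * 'C(m, 2) + m),
      qfib (3 * m).+1 = (-1) ^+ m * q ^+ (3 * 'C(m, 2) + 2 * m),
      qfib (3 * m).+2 = 0 &
      qfib (3 * m).+3 = (-1) ^+ m.+1 * q ^+ (3 * 'C(m.+1, 2) + m.+1)].
Proof.
elim: m => [|m [h0 h1 h2 h3]].
  by rewrite muln0 !qfibSS qfib1 qfib0 qfib_shift0 qfib_shift1; split; ring.
rewrite (_ : (3 * m.+1 = (3 * m).+3)%N); last by lia.
have h4 : qfib (3 * m).+4 = (-1) ^+ m.+1 * q ^+ (3 * 'C(m.+1, 2) + 2 * m.+1).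
  rewrite qfib_rec h3 h1 h0 !(mulnC 3) !(mulnC 2) binS bin1.
  by rewrite !(exprS, exprD, exprM); ring.
have h5 : qfib (3 * m).+4.+1 = 0.
  rewrite qfib_rec h4 h2 h1 !(mulnC 3) !(mulnC 2) binS bin1.
  by rewrite !(exprS, exprD, exprM); ring.
split=> //; rewrite qfib_rec h5 h3 h2 !(mulnC 3) !binS !bin1 ?bin0.
by rewrite !(exprS, exprD, exprM); ring.
Qed.

Lemma lpoly_qint_sum n :
  lpoly n 1 2 (-1) q * qint q n.+1
  = \sum_(0 <= k < n./2.+1) qfib_term n k * qint q (n - k).+1.
Proof.
case: n => [|n]; first by rewrite /lpoly /= big_nat1 qfib_term_n0 qint1 mulr1.
rewrite /lpoly /= big_mkord mulr_suml; apply: eq_bigr => -[k /= lt_k_half] _.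
rewrite /qfib_term.
have [j def_n] : exists j, n.+1 = (k + k + j)%N by exists (n.+1 - (k + k))%N; lia.
rewrite (_ : (2 + n.+1 - k - 1 = (k + j).+1)%N); last by lia.
rewrite (_ : (2 + n.+1 - 1 = n.+2)%N); last by lia.
rewrite (_ : (n.+1 - 2 * k = j)%N); last by lia.
rewrite (_ : (n.+1 - k = k + j)%N); last by lia.
rewrite qbinomE expr1n mulr1 (qfactS (k + j)) (qfactS n.+1).
by field; rewrite !qfact_neq0 qint_neq0.
Qed.

Lemma lpoly_qfib n :
  (1 - q) * (lpoly n 1 2 (-1) q * qint q n.+1) = qfib n - q * qfib_shift n.
Proof.
rewrite lpoly_qint_sum mulr_sumr /qfib /qfib_shift mulr_sumr -sumrB.
rewrite [in RHS](@big_cat_nat _ _ _ n./2.+1) //=; last by lia.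
rewrite [X in _ = _ + X]big_nat_cond [X in _ = _ + X]big1 ?addr0.
  by apply: eq_big_nat => k _; rewrite /qint exprS; field; rewrite subr1q_neq0.
move=> k /andP[/andP[le_half_k _] _].
by rewrite qfib_term_eq0 ?mulr0 ?subrr //; lia.
Qed.

Lemma lpoly_mod3 m :
  [/\ lpoly (3 * m) 1 2 (-1) q * qint q (3 * m).+1
        = (-1) ^+ m * q ^+ (3 * 'C(m, 2) + m) * qint q m.+1,
      lpoly (3 * m).+1 1 2 (-1) q * qint q (3 * m).+2
        = (-1) ^+ m * q ^+ (3 * 'C(m, 2) + 2 * m) * qint q m.+1 * (1 + q ^+ m.+1)
    & lpoly (3 * m).+2 1 2 (-1) q * qint q (3 * m).+3
        = (-1) ^+ m * q ^+ (3 * 'C(m, 2) + 4 * m + 2) * qint q m.+1].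
Proof.
have [h0 h1 h2 h3] := qfib_mod3 m; have [_ h4 _ _] := qfib_mod3 m.+1.
rewrite (_ : (3 * m.+1 = (3 * m).+3)%N) in h4; last by lia.
split; apply: (mulfI subr1q_neq0); rewrite lpoly_qfib qfib_shift_qfib.
- by rewrite h0 h1 h2 /qint !(mulnC 3) !(mulnC 2) !(exprS, exprD, exprM); field; rewrite subr1q_neq0.
- rewrite h1 h2 h3 /qint !(mulnC 3) !(mulnC 2) !binS !bin1 ?bin0.
  by rewrite !(exprS, exprD, exprM); field; rewrite subr1q_neq0.
rewrite h2 h3 h4 /qint !(mulnC 3) !(mulnC 2) !(mulnC 4) !binS !bin1 ?bin0.
by rewrite !(exprS, exprD, exprM); field; rewrite subr1q_neq0.
Qed.

End QFibonacci.

Lemma qX_pow_neq1 j : (0 < j)%N -> qX ^+ j != 1.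
Proof.
move=> j_gt0; rewrite /qX -tofracXn -tofrac1 tofrac_eq.
apply: contraTneq j_gt0 => /(congr1 (fun p : {poly rat} => size p)).
by rewrite size_polyXn size_poly1 => -[->].
Qed.

Lemma mul2_bin2 n : (2 * 'C(n, 2) = n * n.-1)%N.
Proof. by elim: n => [|n IHn] //; rewrite binS bin1 mulnDr IHn; case: n {IHn} => //= n; nia. Qed.

Theorem mainTheorem11 (n : nat) :
  [/\ lpoly (3 * n) 1 2 (-1) qX * qint qX (3 * n).+1
        = (-1) ^+ n * qX ^+ ((n * (3 * n - 1)) %/ 2) * qint qX n.+1,
      lpoly (3 * n).+1 1 2 (-1) qX * qint qX (3 * n).+2
        = (-1) ^+ n * qX ^+ ((n * (3 * n + 1)) %/ 2) * qint qX n.+1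
          * (1 + qX ^+ n.+1)
    & lpoly (3 * n).+2 1 2 (-1) qX * qint qX (3 * n).+3
        = (-1) ^+ n * qX ^+ ((3 * n ^ 2 + 5 * n + 4) %/ 2) * qint qX n.+1].
Proof.
have [l0 l1 l2] := lpoly_mod3 qX_pow_neq1 n.
have C2 := mul2_bin2 n.
have halfE k : (2 * k %/ 2 = k)%N by rewrite mulKn.
rewrite (_ : (n * (3 * n - 1) = 2 * (3 * 'C(n, 2) + n))%N); last by nia.
rewrite (_ : (n * (3 * n + 1) = 2 * (3 * 'C(n, 2) + 2 * n))%N); last by nia.
rewrite (_ : (3 * n ^ 2 + 5 * n + 4 = 2 * (3 * 'C(n, 2) + 4 * n + 2))%N); last by nia.
by rewrite !halfE; split.
Qed.
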